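(* Let $Z$ be a topological space, $S\colon Z\to Z$ continuous, $X\subset Z$ a Borel subset with $S(X)\subset X$, equipped with the induced topology, and $T=S|_X$. Let $\mu$ be a finite $S$-invariant Borel measure on $Z$, and let $\mathcal Z=\{Z_0,\dots,Z_k\}$ be a measurable partition of $Z$ such that $Z_1,\dots,Z_k\subset X$. Then $\mu$ (restricted to $X$) is $T$-invariant and $$h_\mu(\mathcal Z,S)\le h_\mu(\mathcal C,T),\qquad\text{where } \mathcal C=X\cap\mathcal Z=\{X\cap Z_j: 0\le j\le k\}.$$
   Context: For a map $R$ on a space $Y$ and a finite measurable partition $\mathcal P$, $\mathcal P\vee\mathcal Q=\{P\cap Q:P\in\mathcal P,Q\in\mathcal Q,P\cap Q\ne\emptyset\}$ and $\mathcal P^n_R=\mathcal P\vee R^{-1}(\mathcal P)\vee\dots\vee R^{-(n-1)}(\mathcal P)$. For a finite measure $\mu$, $H_\mu(\mathcal P)=\sum_{P\in\mathcal P}\mu(P)\log\frac1{\mu(P)}$ (with $0\log\frac10=0$), and for $R$-invariant $\mu$, $h_\mu(\mathcal P,R)=\lim_n\frac1nH_\mu(\mathcal P^n_R)$. *)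

From HB Require Import structures.
From mathcomp Require Import all_boot all_order all_algebra.
From mathcomp Require Import all_classical all_reals all_analysis.
Set Implicit Arguments. Unset Strict Implicit. Unset Printing Implicit Defensive.
Import Order.TTheory GRing.Theory Num.Theory numFieldNormedType.Exports.
Local Open Scope classical_set_scope.
Local Open Scope ring_scope.

Definition borel (Z : topologicalType) : set (set Z) := <<s @open Z >>.

Definition borel_measure (Z : topologicalType) (R : realType)
  (mu : set Z -> \bar R) : Prop :=
  [/\ mu set0 = 0%E,
      forall A, borel A -> (0 <= mu A)%E &
      forall F : nat -> set Z, (forall n, borel (F n)) -> trivIset setT F ->
        (\sum_(0 <= i < n) mu (F i))%E @[n --> \oo] --> mu (\bigcup_n F n)].

Definition induced_borel (Z : topologicalType) (X : set Z) : set (set {x : Z | X x}) :=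
  <<s [set (@proj1_sig Z X) @^-1` U | U in @open Z] >>.
Arguments induced_borel [Z] X _.

Definition restr_map (Z : Type) (S : Z -> Z) (X : set Z)
  (hSX : forall x, X x -> X (S x)) : {x : Z | X x} -> {x : Z | X x} :=
  fun x => exist X (S (proj1_sig x)) (hSX _ (proj2_sig x)).

Definition restr_measure (Z : Type) (R : realType) (m : set Z -> \bar R) (X : set Z)
  : set {x : Z | X x} -> \bar R := fun B => m (@proj1_sig Z X @` B).
Arguments restr_measure [Z R] m X _.

(* A finite partition P = {P_0,...,P_k} is given as a family indexed by 'I_k.+1.
   The cells of P^n_R = P v R^-1 P v ... v R^-(n-1) P are indexed by words
   w : n.-tuple 'I_k.+1, cell w = \bigcap_{i<n} R^-i (P (w_i)). *)
Definition join_cell (Y : Type) (k n : nat) (R : Y -> Y) (P : 'I_k.+1 -> set Y)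
  (w : n.-tuple 'I_k.+1) : set Y :=
  [set y | forall i : 'I_n, P (tnth w i) (iter i R y)].

Definition ent_fun (R : realType) (x : R) : R :=
  if x == 0 then 0 else x * ln (x^-1).

(* H_m(P^n_R); the measure is finite, so values are real via fine.
   Empty cells have measure 0 and distinct words give distinct nonempty
   cells (P is a partition), so this is the sum over the elements of P^n_R. *)
Definition entropy_n (Y : Type) (R : realType) (m : set Y -> \bar R)
  (T : Y -> Y) (k : nat) (P : 'I_k.+1 -> set Y) (n : nat) : R :=
  \sum_(w : n.-tuple 'I_k.+1) ent_fun (fine (m (join_cell T P w))).

Definition ks_entropy (Y : Type) (R : realType) (m : set Y -> \bar R)
  (T : Y -> Y) (k : nat) (P : 'I_k.+1 -> set Y) : R :=
  limn (fun n : nat => n%:R^-1 * entropy_n m T P n).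

(* The entropies of S and of its restriction T differ only through the cell of
   the all-zero word.  Invariance of mu and S(X) \subset X make S^-i X \ X a
   null set, so a cell of Z^n_S whose word has a letter j <> 0 at position i,
   being contained in S^-i Z_j \subset S^-i X, has the same measure as its
   trace on X, which is the corresponding cell of C^n_T.  As x log(1/x) is
   bounded on [0, mu Z], |H_mu(Z^n_S) - H_mu(C^n_T)| is bounded independently
   of n, and the two entropies are equal.  The same null-set argument with
   i = 1 gives the T-invariance of mu on X. *)

From mathcomp Require Import all_boot all_order all_algebra.
From mathcomp Require Import all_classical all_reals all_analysis.
From mathcomp Require Import lra.
Import Order.TTheory GRing.Theory Num.Theory numFieldNormedType.Exports.
Set Implicit Arguments. Unset Strict Implicit. Unset Printing Implicit Defensive.
Local Open Scope classical_set_scope.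
Local Open Scope ring_scope.

Section Borel.
Variable Z : topologicalType.
Implicit Types A B : set Z.

Lemma borel0 : borel (@set0 Z).
Proof. exact: sigma_algebra0. Qed.

Lemma borelC A : borel A -> borel (~` A).
Proof. by move=> hA; rewrite -setTD; exact: sigma_algebraCD. Qed.

Lemma borelT : borel [set: Z].
Proof. by rewrite -setC0; apply: borelC; exact: borel0. Qed.

Lemma borel_bigcup (F : nat -> set Z) :
  (forall n, borel (F n)) -> borel (\bigcup_n F n).
Proof. exact: sigma_algebra_bigcup. Qed.

Lemma borelU A B : borel A -> borel B -> borel (A `|` B).
Proof.
by move=> hA hB; rewrite -bigcup2E; apply: borel_bigcup => -[|[|n]] //=; exact: borel0.
Qed.

Lemma borelI A B : borel A -> borel B -> borel (A `&` B).
Proof.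
move=> hA hB; rewrite -[_ `&` _]setCK setCI.
by apply: borelC; apply: borelU; exact: borelC.
Qed.

Lemma borelD A B : borel A -> borel B -> borel (A `\` B).
Proof. by move=> hA hB; rewrite setDE; apply: borelI => //; exact: borelC. Qed.

Lemma open_borel A : open A -> borel A.
Proof. exact: sub_sigma_algebra. Qed.

Lemma borel_preimage (S : Z -> Z) A : continuous S -> borel A -> borel (S @^-1` A).
Proof.
move=> cS; apply: (@smallest_sub _ _ _ [set A | borel (S @^-1` A)]).
  split => /=.
  - by rewrite preimage_set0; exact: borel0.
  - by move=> B hB; rewrite setTD preimage_setC; exact: borelC.
  - by move=> F hF; rewrite preimage_bigcup; exact: borel_bigcup.
by move=> B oB; apply: open_borel; move/continuousP: cS; apply.
Qed.

Lemma borel_preimage_iter (S : Z -> Z) A i :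
  continuous S -> borel A -> borel (iter i S @^-1` A).
Proof.
move=> cS hA; elim: i => [//|i IH].
by rewrite iterfSr comp_preimage; exact: borel_preimage.
Qed.

Lemma borel_join_cell (S : Z -> Z) k n (P : 'I_k.+1 -> set Z)
    (w : n.-tuple 'I_k.+1) :
  continuous S -> (forall j, borel (P j)) -> borel (join_cell S P w).
Proof.
move=> cS hP.
have -> : join_cell S P w =
    \big[setI/setT]_(i <- enum 'I_n) (iter i S @^-1` P (tnth w i)).
  rewrite -bigcap_seq; apply/seteqP; split=> [y hy i _ | y hy i]; first exact: hy.
  by apply: hy; rewrite /= mem_enum.
elim/big_ind: _ => //; [exact: borelT | exact: borelI | move=> i _].
exact: borel_preimage_iter.
Qed.

End Borel.

Section FiniteBorelMeasure.
Local Open Scope ereal_scope.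
Variables (Z : topologicalType) (R : realType) (mu : set Z -> \bar R).
Hypotheses (hmu : borel_measure mu) (hfin : mu setT < +oo).
Implicit Types A B : set Z.

Lemma borel_measure_ge0 A : borel A -> 0 <= mu A.
Proof. by case: hmu => _ + _; apply. Qed.

Lemma borel_measureU A B : borel A -> borel B -> A `&` B = set0 ->
  mu (A `|` B) = mu A + mu B.
Proof.
case: hmu => mu0 _ mu_sigma hA hB AB0.
have hF n : borel (bigcup2 A B n) by case: n => [|[|n]] //=; exact: borel0.
move: (mu_sigma _ hF); rewrite -trivIset_bigcup2 bigcup2E => /(_ AB0) cvg_sum.
apply: (cvg_unique (@ereal_hausdorff R) cvg_sum).
rewrite /= -(cvg_shiftn 2).
apply: cvg_near_cst; apply: nearW => n /=.
by rewrite addn2 big_nat_recl // big_nat_recl //= big1 ?adde0.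
Qed.

Lemma borel_measureDI A B : borel A -> borel B ->
  mu A = mu (A `\` B) + mu (A `&` B).
Proof.
move=> hA hB; rewrite addeC -borel_measureU ?setUIDK //.
- exact: borelI.
- exact: borelD.
by rewrite setDE setIACA setICr setI0.
Qed.

Lemma le_borel_measure A B : borel A -> borel B -> A `<=` B -> mu A <= mu B.
Proof.
move=> hA hB AB; rewrite (borel_measureDI hB hA) setIidr //.
by rewrite leeDr // borel_measure_ge0 //; exact: borelD.
Qed.

Lemma borel_measure_fin_num A : borel A -> mu A \is a fin_num.
Proof.
move=> hA; rewrite ge0_fin_numE ?borel_measure_ge0 //.
by apply: le_lt_trans hfin; apply: le_borel_measure => //; exact: borelT.
Qed.

Lemma fine_borel_measure_le A : borel A ->
  (0 <= fine (mu A) <= fine (mu setT))%R.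
Proof.
move=> hA; rewrite fine_ge0 ?borel_measure_ge0 //=.
apply: fine_le; rewrite ?borel_measure_fin_num //; try exact: borelT.
by apply: le_borel_measure => //; exact: borelT.
Qed.

Lemma borel_measureD_eq0 A B : borel A -> borel B -> A `<=` B -> mu A = mu B ->
  mu (B `\` A) = 0.
Proof.
move=> hA hB AB muAB; have finA := borel_measure_fin_num hA.
have muB : mu B = mu (B `\` A) + mu A by rewrite (borel_measureDI hB hA) setIidr.
by rewrite -[LHS](addeK _ finA) -muB -muAB subee.
Qed.

End FiniteBorelMeasure.

Section InducedSubspace.
Variables (Z : topologicalType) (X : set Z).
Local Notation val := (@proj1_sig Z X).

Lemma val_injective : injective val.
Proof. by move=> [x Xx] [y Xy] /= xy; exact: eq_exist. Qed.

Lemma preimage_image_val (B : set {x | X x}) : val @^-1` (val @` B) = B.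
Proof.
apply/seteqP; split=> [y [b Bb /val_injective <-] //|]; exact: preimage_image.
Qed.

Lemma image_val_preimage (U : set Z) : val @` (val @^-1` U) = X `&` U.
Proof.
apply/seteqP; split=> [_ [y Uy <-]|x [Xx Ux]]; first by split=> //; exact: proj2_sig.
by exists (exist X x Xx).
Qed.

Lemma induced_borel_image B : borel X -> induced_borel X B -> borel (val @` B).
Proof.
move=> hX; apply: (@smallest_sub _ _ _ [set B | borel (val @` B)]).
  split => /=.
  - by rewrite image_set0; exact: borel0.
  - move=> C hC; rewrite setTD -[C in ~` C]preimage_image_val preimage_setC.
    by rewrite image_val_preimage -setDE; exact: borelD.
  - by move=> F hF; rewrite image_bigcup; exact: borel_bigcup.
move=> _ [U oU <-] /=; rewrite image_val_preimage.
by apply: borelI => //; exact: open_borel.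
Qed.

Variables (S : Z -> Z) (hSX : forall x, X x -> X (S x)).

Lemma iter_restr_map i (y : {x | X x}) :
  val (iter i (restr_map hSX) y) = iter i S (val y).
Proof. by elim: i => [//|i IH]; rewrite !iterS /= IH. Qed.

Lemma preimage_restr_map (B : set {x | X x}) :
  restr_map hSX @^-1` B = val @^-1` (S @^-1` (val @` B)).
Proof. by rewrite -[B in LHS]preimage_image_val. Qed.

Lemma preimage_val_join_cell k n (P : 'I_k.+1 -> set Z) (w : n.-tuple 'I_k.+1) :
  join_cell (restr_map hSX) (fun j => val @^-1` P j) w = val @^-1` join_cell S P w.
Proof.
apply/seteqP; split=> y hy i; last by rewrite /preimage /= iter_restr_map; exact: hy.
by rewrite -iter_restr_map; exact: hy.
Qed.

End InducedSubspace.

Section EntropyEstimates.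
Variable R : realType.

Lemma ln_le_subr1 (y : R) : 0 < y -> ln y <= y - 1.
Proof.
by move=> y0; have := @le_ln1Dx R (y - 1); rewrite (addrC 1) subrK; apply; lra.
Qed.

Lemma ent_fun_bound (M x : R) : 0 <= x <= M -> `|ent_fun x| <= 1 + M ^+ 2.
Proof.
case/andP=> x0 xM; rewrite /ent_fun; case: eqP => [_|/eqP xn0].
  by rewrite normr0 addr_ge0 ?sqr_ge0.
have xp : 0 < x by rewrite lt_def xn0.
rewrite lnV ?posrE //.
have lnVx : - ln x <= x^-1 - 1.
  by rewrite -lnV ?posrE //; apply: ln_le_subr1; rewrite invr_gt0.
have upper : x * - ln x <= x * (x^-1 - 1) by rewrite ler_pM2l.
rewrite mulrBr mulfV // mulr1 in upper.
have lower : x * (1 - x) <= x * - ln x.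
  by rewrite ler_pM2l // lerNr opprB ln_le_subr1.
rewrite ler_norml; apply/andP; split; nra.
Qed.

(* Also when neither limit exists: limn then picks from the same set. *)
Lemma limn_eq_of_cvg0 (u v : R ^nat) : (fun n => u n - v n) @ \oo --> 0 ->
  limn u = limn v.
Proof.
move=> uv0; suff uvE (l : R) : (u @ \oo --> l) <-> (v @ \oo --> l).
  by rewrite /lim /lim_in; congr get; apply/funext => l; exact/propext/uvE.
split=> [ul | vl].
  have -> : v = (fun n => u n - (u n - v n)) by apply/funext => n; rewrite subKr.
  by rewrite -(subr0 l); exact: cvgB.
have -> : u = (fun n => v n + (u n - v n)) by apply/funext => n; rewrite addrC subrK.
by rewrite -(addr0 l); exact: cvgD.
Qed.

Lemma limn_avg_eq_of_bounded (a b : R ^nat) (K : R) : (forall n, `|a n - b n| <= K) ->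
  limn (fun n => n%:R^-1 * a n) = limn (fun n => n%:R^-1 * b n).
Proof.
move=> abK; apply: limn_eq_of_cvg0.
have invn0 : (fun n : nat => (n%:R : R)^-1) @ \oo --> 0.
  by rewrite -cvg_shiftS; exact: cvg_harmonic.
have Kinvn0 : (fun n : nat => K * n%:R^-1) @ \oo --> 0.
  by rewrite -(mulr0 K); apply: cvgM => //; exact: cvg_cst.
apply: (@squeeze_cvgr _ _ _ _
  (fun n => - (K * n%:R^-1)) (fun n => K * n%:R^-1)).
- apply: nearW => n; rewrite -mulrBr -ler_norml normrM normfV normr_nat mulrC.
  by apply: ler_wpM2r; rewrite ?invr_ge0.
- by rewrite -[X in _ --> X]oppr0; exact: cvgN.
- exact: Kinvn0.
Qed.

End EntropyEstimates.

Section InvariantSubset.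
Local Open Scope ereal_scope.
Variables (Z : topologicalType) (R : realType) (S : Z -> Z) (X : set Z)
  (mu : set Z -> \bar R).
Hypotheses (hmu : borel_measure mu) (hfin : mu setT < +oo) (hS : continuous S)
  (hX : borel X) (hSX : forall x, X x -> X (S x))
  (hinv : forall A, borel A -> mu (S @^-1` A) = mu A).

Lemma measure_preimage_iter A i : borel A -> mu (iter i S @^-1` A) = mu A.
Proof.
move=> hA; elim: i => [//|i IH].
by rewrite iterfSr comp_preimage hinv //; exact: borel_preimage_iter.
Qed.

Lemma sub_preimage_iter i : X `<=` iter i S @^-1` X.
Proof. by elim: i => [//|i IH] x /IH; rewrite /preimage /= => /hSX. Qed.

Lemma measure_setIX E i : borel E -> E `<=` iter i S @^-1` X ->
  mu (E `&` X) = mu E.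
Proof.
move=> hE EX; have hXi := borel_preimage_iter i hS hX.
have null : mu (iter i S @^-1` X `\` X) = 0.
  apply: borel_measureD_eq0 => //; first exact: sub_preimage_iter.
  by rewrite measure_preimage_iter.
rewrite [RHS](borel_measureDI hmu hE hX).
suff -> : mu (E `\` X) = 0 by rewrite add0e.
apply/eqP; rewrite eq_le borel_measure_ge0 ?andbT //; last exact: borelD.
rewrite -null (le_borel_measure hmu) //; [exact: borelD | exact: borelD |].
exact: setSD.
Qed.

Local Notation val := (@proj1_sig Z X).

Lemma restr_measure_invariant (B : set {x | X x}) : induced_borel X B ->
  restr_measure mu X (restr_map hSX @^-1` B) = restr_measure mu X B.
Proof.
move=> hB; have hA := induced_borel_image hX hB.
rewrite /restr_measure preimage_restr_map image_val_preimage setIC.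
rewrite (@measure_setIX _ 1) ?hinv //; first exact: borel_preimage.
by move=> x [y _ yx]; rewrite /preimage /= -yx; exact: proj2_sig.
Qed.

Variables (k : nat) (P : 'I_k.+1 -> set Z).
Hypotheses (hP : forall j, borel (P j)) (hPX : forall j, j != ord0 -> P j `<=` X).

Lemma measure_join_cellIX n (w : n.-tuple 'I_k.+1) : w != nseq_tuple n ord0 ->
  mu (join_cell S P w `&` X) = mu (join_cell S P w).
Proof.
move=> w_neq0; have [i wi_neq0] : exists i, tnth w i != ord0.
  apply/existsP; apply: contraNT w_neq0; rewrite negb_exists => /forallP w0.
  by apply/eqP/eq_from_tnth => i; rewrite tnth_nseq; exact/eqP/negPn.
apply: (@measure_setIX _ i); first exact: borel_join_cell.
by move=> y /(_ i); exact: hPX.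
Qed.

Lemma entropy_n_restr_measureE n (w0 := nseq_tuple n (@ord0 k)) :
  (entropy_n mu S P n
   - entropy_n (restr_measure mu X) (restr_map hSX) (fun j => val @^-1` P j) n
  = ent_fun (fine (mu (join_cell S P w0)))
    - ent_fun (fine (mu (join_cell S P w0 `&` X))))%R.
Proof.
rewrite /entropy_n (bigD1 w0) // [in X in (_ - X)%R](bigD1 w0) //=.
rewrite /restr_measure preimage_val_join_cell image_val_preimage setIC.
under [in X in (_ - X)%R]eq_bigr => w w_neq0.
  rewrite preimage_val_join_cell image_val_preimage setIC measure_join_cellIX //.
over.
by rewrite opprD addrACA subrr addr0.
Qed.

Lemma ks_entropy_restr_measure :
  ks_entropy mu S P =
  ks_entropy (restr_measure mu X) (restr_map hSX) (fun j => val @^-1` P j).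
Proof.
pose M := fine (mu setT).
apply: (@limn_avg_eq_of_bounded _ _ _ ((1 + M ^+ 2) + (1 + M ^+ 2))) => n.
rewrite entropy_n_restr_measureE.
have hw0 := borel_join_cell (nseq_tuple n (@ord0 k)) hS hP.
apply: (le_trans (ler_normB _ _)); apply: lerD; apply: ent_fun_bound.
- exact: fine_borel_measure_le.
- by apply: fine_borel_measure_le => //; exact: borelI.
Qed.

End InvariantSubset.

Theorem lemma2p10 (R : realType) (Z : topologicalType) (S : Z -> Z)
  (X : set Z) (k : nat) (Zp : 'I_k.+1 -> set Z)
  (mu : set Z -> \bar R) (hmu : borel_measure mu)
  (hS : continuous S)
  (hX : borel X)
  (hSX : forall x, X x -> X (S x))
  (hfin : (mu setT < +oo)%E)
  (hinv : forall A, borel A -> mu (S @^-1` A) = mu A)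
  (hZmeas : forall j, borel (Zp j))
  (hZcover : \bigcup_j Zp j = setT)
  (hZdisj : forall i j, i != j -> Zp i `&` Zp j = set0)
  (hZX : forall j : 'I_k.+1, j != ord0 -> Zp j `<=` X) :
  (forall B : set {x : Z | X x}, induced_borel X B ->
     restr_measure mu X (restr_map hSX @^-1` B) = restr_measure mu X B) /\
  ks_entropy mu S Zp <=
  ks_entropy (restr_measure mu X) (restr_map hSX)
             (fun j => (@proj1_sig Z X) @^-1` Zp j).
Proof.
split; first exact: restr_measure_invariant.
by rewrite (ks_entropy_restr_measure hmu hfin hS hX hSX hinv hZmeas hZX).
Qed.
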